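(* Let $[N]=\{1,\dots,N\}$ be a set of arms, $H\ge 1$ a horizon, and let $\tau$ be a trajectory specifying, for every time step $h\in[H]$ and arm $i\in[N]$, a state $s_h^{i}$ and a binary action $a_h^{i}\in\{0,1\}$. For each $h\in[H]$ let $f_{\text{source}}(h)\subseteq[N]$ and $f_{\text{target}}(h)\subseteq[N]$ be given sets of arms (they may be determined by static features of the arms and by the states and actions recorded in $\tau$). Consider the following randomized procedure (the ''Convert Aggregate Behavior to Trajectory'' algorithm). For $h=1,2,\dots,H$: set $C_{A,h}=\{c\in f_{\text{source}}(h): a_h^{c}=1\}$ and $C_{B,h}=\{c\in f_{\text{target}}(h): a_h^{c}=0\}$; then, iterating over the elements $c_B\in C_{B,h}$ in a fixed order, if $C_{A,h}\neq\varnothing$, choose $c_A$ uniformly at random from the current $C_{A,h}$, set $a_h^{c_B}=1$ and $a_h^{c_A}=0$, and remove $c_A$ from $C_{A,h}$. All random choices are made independently. The procedure returns the modified trajectory. Then this procedure allocates actions with maximum entropy: any two trajectories that the procedure outputs with positive probability are output with equal probability, i.e. the output is uniformly distributed over its support (equivalently, the output distribution has maximum Shannon entropy among all distributions on that support).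
   Context: An RMAB has $N$ arms; at each time step each arm is in a state and receives action $1$ (intervene/pull) or $0$ (no intervention). A trajectory records the joint states and joint actions of all arms over time steps $1,\dots,H$. The procedure only changes actions, never states. *)

From mathcomp Require Import all_boot all_order all_algebra.
Set Implicit Arguments. Unset Strict Implicit. Unset Printing Implicit Defensive.
Import Order.TTheory GRing.Theory Num.Theory.
Local Open Scope ring_scope.

(* A finitely supported distribution: list of (weight, outcome). *)
Definition dist (T : Type) := seq (rat * T).

Definition dret {T : Type} (x : T) : dist T := [:: (1, x)].

Definition dbind {T U : Type} (d : dist T) (f : T -> dist U) : dist U :=
  flatten [seq [seq (p.1 * q.1, q.2) | q <- f p.2] | p <- d].

(* uniform choice from a (nonempty, duplicate-free) list *)
Definition duniform {T : Type} (s : seq T) : dist T :=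
  [seq ((size s)%:R^-1, x) | x <- s].

Definition prob {T : eqType} (d : dist T) (x : T) : rat :=
  \sum_(p <- d | p.2 == x) p.1.

(* Trajectory over arms 'I_N and time steps 'I_H (step h in the paper is
   index h-1 here): states s_h^i and binary actions a_h^i. *)
Definition traj (S : eqType) (N H : nat) : Type :=
  ({ffun 'I_H -> {ffun 'I_N -> S}} * {ffun 'I_H -> {ffun 'I_N -> bool}})%type.

Definition swap_act N (a : {ffun 'I_N -> bool}) (cB cA : 'I_N) :
  {ffun 'I_N -> bool} :=
  [ffun j => if j == cB then true else if j == cA then false else a j].

(* inner loop over the elements c_B of C_{B,h}, in the order given by CB,
   with the current pool CA of candidates c_A *)
Fixpoint inner_loop N (CA CB : seq 'I_N) (a : {ffun 'I_N -> bool}) :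
  dist {ffun 'I_N -> bool} :=
  match CB with
  | [::] => dret a
  | cB :: CB' =>
      if CA is [::] then inner_loop CA CB' a
      else dbind (duniform CA)
             (fun cA => inner_loop (rem cA CA) CB' (swap_act a cB cA))
  end.

Definition C_A N (fsrc : {set 'I_N}) (a : {ffun 'I_N -> bool}) : {set 'I_N} :=
  [set c in fsrc | a c].
Definition C_B N (ftgt : {set 'I_N}) (a : {ffun 'I_N -> bool}) : {set 'I_N} :=
  [set c in ftgt | ~~ a c].

(* one step h of the outer loop; ordB h is the fixed order in which the
   elements of C_{B,h} are iterated *)
Definition cabt_step (S : eqType) N H
  (fsrc ftgt : 'I_H -> {set 'I_N}) (ordB : 'I_H -> seq 'I_N)
  (h : 'I_H) (t : traj S N H) : dist (traj S N H) :=
  let a := t.2 h in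
  dbind (inner_loop (enum (C_A (fsrc h) a)) (ordB h) a)
    (fun a' => dret (t.1, [ffun h' => if h' == h then a' else t.2 h'])).

Fixpoint cabt_from (S : eqType) N H
  (fsrc ftgt : 'I_H -> {set 'I_N}) (ordB : 'I_H -> seq 'I_N)
  (hs : seq 'I_H) (t : traj S N H) : dist (traj S N H) :=
  match hs with
  | [::] => dret t
  | h :: hs' => dbind (cabt_step fsrc ftgt ordB h t)
                      (cabt_from fsrc ftgt ordB hs')
  end.

Definition cabt (S : eqType) N H
  (fsrc ftgt : 'I_H -> {set 'I_N}) (ordB : 'I_H -> seq 'I_N)
  (t : traj S N H) : dist (traj S N H) :=
  cabt_from fsrc ftgt ordB (enum 'I_H) t.

From mathcomp Require Import all_boot all_order all_algebra ring.
Set Implicit Arguments. Unset Strict Implicit. Unset Printing Implicit Defensive.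
Import Order.TTheory GRing.Theory Num.Theory.
Local Open Scope ring_scope.

(* With k = min(|C_A|, |C_B|), the inner loop at a time step
   switches on the first k targets and switches off a k-subset of C_A; each of
   the k! orders in which that subset can be drawn has probability
   1/(m(m-1)...(m-k+1)) with m = |C_A|, so every output has probability
   1/C(m, k) and the step is flat.  Binding flat stages whose continuations
   have pairwise disjoint supports stays flat, and this holds for the outer
   loop because distinct outcomes of step h differ only at time h, which the
   later steps never touch. *)

Definition dsupp (T : Type) (d : dist T) : seq T := map snd d.

Definition flat_dist (T : eqType) (d : dist T) (c : rat) : Prop :=
  forall x, prob d x = 0 \/ prob d x = c.

Lemma prob_dret (T : eqType) (x y : T) : prob (dret x) y = (x == y)%:R.
Proof. by rewrite /prob big_cons big_nil /=; case: (x == y); rewrite ?addr0. Qed.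

Lemma prob_dbind (T : Type) (U : eqType) (d : dist T) (f : T -> dist U) y :
  prob (dbind d f) y = \sum_(p <- d) p.1 * prob (f p.2) y.
Proof.
elim: d => [|p d]; first by rewrite /prob /dbind /= !big_nil.
by rewrite /prob /dbind /= big_cat big_cons => ->; rewrite big_map mulr_sumr.
Qed.

Lemma prob_neq0_dsupp (T : eqType) (d : dist T) x : prob d x != 0 -> x \in dsupp d.
Proof.
apply: contraR => xNd; rewrite /prob big1_seq // => p /andP[/eqP px pd].
by move: xNd; rewrite -px /dsupp map_f.
Qed.

Lemma dsupp_dbind (T U : eqType) (d : dist T) (f : T -> dist U) y :
  y \in dsupp (dbind d f) -> exists2 x, x \in dsupp d & y \in dsupp (f x).
Proof.
rewrite /dsupp /dbind => /mapP[_ /flattenP[_ /mapP[p pd ->] /mapP[q qf ->]] ->].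
exists p.2; [exact: map_f | exact: (map_f snd qf)].
Qed.

Lemma flat_dret (T : eqType) (x : T) : flat_dist (dret x) 1.
Proof. by move=> y; rewrite prob_dret; case: (x == y); [right | left]. Qed.

Lemma flat_dbind (T U : eqType) (d : dist T) (f : T -> dist U) c c' :
  flat_dist d c -> {in dsupp d, forall x, flat_dist (f x) c'} ->
  (forall x1 x2 y, x1 \in dsupp d -> x2 \in dsupp d ->
     y \in dsupp (f x1) -> y \in dsupp (f x2) -> x1 = x2) ->
  flat_dist (dbind d f) (c * c').
Proof.
move=> flat_d flat_f disj y; rewrite prob_dbind.
have [/hasP[x xd fxy]|/hasPn fy0] := boolP (has (fun x => prob (f x) y != 0) (dsupp d)).
  have -> : \sum_(p <- d) p.1 * prob (f p.2) y = prob d x * prob (f x) y.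
    rewrite [prob d x]/prob mulr_suml [RHS]big_mkcond; apply: eq_big_seq => p pd /=.
    have [-> // | p2Nx] := eqVneq p.2 x.
    have [fp2y|/negPn/eqP ->] := boolP (prob (f p.2) y != 0); last by rewrite mulr0.
    by rewrite (disj _ _ y (map_f snd pd) xd (prob_neq0_dsupp fp2y)
                  (prob_neq0_dsupp fxy)) eqxx in p2Nx.
  have [|] := flat_d x => ->; first by left; rewrite mul0r.
  by have [|] := flat_f x xd y => ->; [left; rewrite mulr0 | right].
left; apply: big1_seq => p /andP[_ pd].
by move: (fy0 p.2 (map_f snd pd)) => /negPn/eqP ->; rewrite mulr0.
Qed.

Section SwapAct.
Variables (N : nat) (a : {ffun 'I_N -> bool}) (cB cA : 'I_N).

Lemma swap_act_target : swap_act a cB cA cB.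
Proof. by rewrite ffunE eqxx. Qed.

Lemma swap_act_source : cA != cB -> swap_act a cB cA cA = false.
Proof. by rewrite ffunE eqxx => /negbTE ->. Qed.

Lemma swap_act_other j : j != cB -> j != cA -> swap_act a cB cA j = a j.
Proof. by rewrite ffunE => /negbTE -> /negbTE ->. Qed.

End SwapAct.

Definition inner_loop_supp N (CA CB : seq 'I_N) (a y : {ffun 'I_N -> bool}) :=
  let k := minn (size CA) (size CB) in
  [&& all y (take k CB),
      [forall j, (j \notin CA) ==> (j \notin take k CB) ==> (y j == a j)]
    & count (predC y) CA == k].

Lemma all_swap_act_rem N (CA : seq 'I_N) cB c (a : {ffun 'I_N -> bool}) :
  uniq CA -> all a CA -> ~~ a cB -> all (swap_act a cB c) (rem c CA).
Proof.
move=> CA_uniq CA_on cB_off; apply/allP => j; rewrite mem_rem_uniq // inE.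
case/andP => jNc jCA; have a_j := allP CA_on j jCA.
by rewrite swap_act_other //; apply: contraTneq a_j => ->.
Qed.

Lemma all_predC_swap_act N (CB : seq 'I_N) cB c (a : {ffun 'I_N -> bool}) :
  cB \notin CB -> all (predC a) CB -> a c -> all (predC (swap_act a cB c)) CB.
Proof.
move=> cBNCB CB_off a_c; apply/allP => j jCB; have /= a_j := allP CB_off j jCB.
rewrite /= swap_act_other //; first by apply: contraNneq cBNCB => <-.
by apply: contraNneq a_j => ->.
Qed.

Section InnerLoopStep.
Variables (N : nat) (CA : seq 'I_N) (cB c : 'I_N) (a : {ffun 'I_N -> bool}).
Hypotheses (CA_uniq : uniq CA) (CA_on : all a CA) (cB_off : ~~ a cB) (c_CA : c \in CA).

Let cBNCA : cB \notin CA.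
Proof. by apply: contra cB_off => /(allP CA_on). Qed.

Let c_neq_cB : c != cB.
Proof. by apply: contraNneq cBNCA => <-. Qed.

Let mem_rem_c j : (j \in rem c CA) = (j != c) && (j \in CA).
Proof. by rewrite mem_rem_uniq // inE. Qed.

Lemma agree_swap_act (T : seq 'I_N) (y : {ffun 'I_N -> bool}) :
  c \notin T -> cB \notin T ->
  [forall j, (j \notin rem c CA) ==> (j \notin T) ==> (y j == swap_act a cB c j)] =
  [&& y cB, ~~ y c & [forall j, (j \notin CA) ==> (j \notin cB :: T) ==> (y j == a j)]].
Proof.
move=> cNT cBNT; apply/forallP/and3P => [agree | [y_cB yNc agree] j].
  have cBNrem : cB \notin rem c CA by rewrite mem_rem_c negb_and cBNCA orbT.
  have cNrem : c \notin rem c CA by rewrite mem_rem_c eqxx.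
  split.
  - by move: (agree cB); rewrite cBNrem cBNT swap_act_target => /eqP ->.
  - by move: (agree c); rewrite cNrem cNT swap_act_source // => /eqP ->.
  apply/forallP => j; apply/implyP => jNCA; apply/implyP; rewrite inE negb_or.
  case/andP => jNcB jNT; have jNc : j != c by apply: contraNneq jNCA => ->.
  by move: (agree j); rewrite mem_rem_c (negbTE jNCA) andbF jNT swap_act_other.
apply/implyP; rewrite mem_rem_c negb_and negbK => jNrem; apply/implyP => jNT.
have [-> | jNcB] := eqVneq j cB; first by rewrite swap_act_target y_cB.
have [-> | jNc] := eqVneq j c; first by rewrite swap_act_source // (negbTE yNc).
rewrite swap_act_other //; move/forallP/(_ j): agree; rewrite inE negb_or jNcB jNT.
by rewrite (negbTE jNc) /= in jNrem; rewrite jNrem.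
Qed.

Lemma inner_loop_supp_swap (CB : seq 'I_N) (y : {ffun 'I_N -> bool}) :
  cB \notin CB -> all (predC a) CB ->
  inner_loop_supp (rem c CA) CB (swap_act a cB c) y =
  inner_loop_supp CA (cB :: CB) a y && ~~ y c.
Proof.
move=> cBNCB CB_off.
have [m size_CA] : exists m, size CA = m.+1 by case: (CA) c_CA => // x s; exists (size s).
have cNCB : c \notin CB by apply: contraTN (allP CA_on c c_CA) => /(allP CB_off).
rewrite /inner_loop_supp size_rem // size_CA /= minnSS /=.
set T := take _ CB.
have notin_T j : j \notin CB -> j \notin T by apply: contra; apply: mem_take.
rewrite agree_swap_act ?notin_T // (permP (perm_to_rem c_CA)) /=.
by case: (y c) (y cB) => [] [] /=; rewrite ?andbF ?andbT ?add1n.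
Qed.

End InnerLoopStep.

Lemma invr_binS m j : (j <= m)%N ->
  (m.+1%:R^-1 * ('C(m, j)%:R^-1 *+ j.+1) : rat) = 'C(m.+1, j.+1)%:R^-1.
Proof.
move=> le_jm; have Cmj_neq0 : 'C(m, j)%:R != 0 :> rat by rewrite pnatr_eq0 -lt0n bin_gt0.
have -> : 'C(m.+1, j.+1)%:R = m.+1%:R * 'C(m, j)%:R / j.+1%:R :> rat.
  by rewrite -natrM mul_bin_diag natrM mulrAC divff ?mul1r // pnatr_eq0.
by rewrite -[_ *+ j.+1]mulr_natr; field; rewrite Cmj_neq0 !nat1r !pnatr_eq0.
Qed.

Lemma inner_loop_supp_nil N (CA : seq 'I_N) (a y : {ffun 'I_N -> bool}) :
  all a CA -> inner_loop_supp CA [::] a y = (a == y).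
Proof.
move=> CA_on; rewrite /inner_loop_supp minn0 take0 /= eqn0Ngt -has_count has_predC negbK.
apply/andP/eqP => [[/forallP agree /allP CA_on_y]|<-]; last first.
  by split; [apply/forallP => j; rewrite eqxx !implybT | exact: CA_on].
apply/ffunP => j; have [jCA|jNCA] := boolP (j \in CA).
  by rewrite (allP CA_on j jCA) CA_on_y.
by move: (agree j); rewrite jNCA => /eqP.
Qed.

Lemma prob_inner_loop N (CA CB : seq 'I_N) (a y : {ffun 'I_N -> bool}) :
  uniq CA -> uniq CB -> all a CA -> all (predC a) CB ->
  prob (inner_loop CA CB a) y =
  if inner_loop_supp CA CB a y then 'C(size CA, minn (size CA) (size CB))%:R^-1 else 0.
Proof.
elim: CB CA a => [|cB CB IH] CA a CA_uniq + CA_on.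
  by rewrite prob_dret inner_loop_supp_nil // minn0 bin0 invr1; case: (a == y).
move=> /andP[cBNCB CB_uniq] /andP[cB_off CB_off].
have [-> | CA_nil] := eqVneq CA [::].
  by rewrite /= IH //= /inner_loop_supp /= !min0n !take0.
have -> : inner_loop CA (cB :: CB) a =
    dbind (duniform CA) (fun c => inner_loop (rem c CA) CB (swap_act a cB c)).
  by case: CA CA_nil {CA_uniq CA_on}.
have [m size_CA] : exists m, size CA = m.+1.
  by case: CA CA_nil {CA_uniq CA_on} => // c CA; exists (size CA).
rewrite prob_dbind /duniform big_map.
pose w : rat := 'C(m, minn m (size CB))%:R^-1.
rewrite (eq_big_seq (fun c => (size CA)%:R^-1 *
    (if inner_loop_supp CA (cB :: CB) a y && ~~ y c then w else 0))); last first.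
  move=> c c_CA /=; rewrite IH ?rem_uniq ?all_swap_act_rem //.
    by rewrite inner_loop_supp_swap // size_rem // size_CA.
  by apply: all_predC_swap_act => //; apply: (allP CA_on).
rewrite -mulr_sumr; case supp_y : (inner_loop_supp CA (cB :: CB) a y); last first.
  by rewrite big1 ?mulr0.
rewrite -big_mkcond big_const_seq iter_addr_0 /=.
move/and3P: supp_y => [_ _ /eqP ->]; rewrite size_CA minnSS.
by apply: invr_binS; apply: geq_minl.
Qed.

Section Procedure.
Variables (S : eqType) (N H : nat) (fsrc ftgt : 'I_H -> {set 'I_N})
  (ordB : 'I_H -> seq 'I_N).

Definition inactive_order (h : 'I_H) (a : {ffun 'I_N -> bool}) : bool :=
  uniq (ordB h) && all (predC a) (ordB h).

Definition step_weight (h : 'I_H) (a : {ffun 'I_N -> bool}) : rat :=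
  'C(#|C_A (fsrc h) a|, minn #|C_A (fsrc h) a| (size (ordB h)))%:R^-1.

Lemma dsupp_cabt_step h (t x : traj S N H) :
  x \in dsupp (cabt_step fsrc ftgt ordB h t) ->
  x.1 = t.1 /\ forall h', h' != h -> x.2 h' = t.2 h'.
Proof.
case/dsupp_dbind => a _; rewrite inE => /eqP -> /=.
by split=> // h' /negbTE h'Nh; rewrite ffunE h'Nh.
Qed.

Lemma flat_cabt_step h (t : traj S N H) : inactive_order h (t.2 h) ->
  flat_dist (cabt_step fsrc ftgt ordB h t) (step_weight h (t.2 h)).
Proof.
case/andP => ord_uniq ord_off; rewrite -[step_weight _ _]mulr1; apply: flat_dbind.
- have CA_on : all (t.2 h) (enum (C_A (fsrc h) (t.2 h))).
    by apply/allP => j; rewrite mem_enum inE => /andP[].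
  move=> a; rewrite prob_inner_loop ?enum_uniq // -cardE.
  by case: ifP => _; [right | left].
- by move=> a _; apply: flat_dret.
move=> a1 a2 y _ _; rewrite !inE => /eqP -> /eqP [/ffunP /(_ h)].
by rewrite !ffunE eqxx.
Qed.

Lemma dsupp_cabt_from hs (t y : traj S N H) :
  y \in dsupp (cabt_from fsrc ftgt ordB hs t) ->
  y.1 = t.1 /\ forall h, h \notin hs -> y.2 h = t.2 h.
Proof.
elim: hs t => [|h hs IH] t /=; first by rewrite inE => /eqP ->.
case/dsupp_dbind => x /dsupp_cabt_step[x_t x_t'] /IH[y_x y_x'].
split=> [|h']; first by rewrite y_x x_t.
by rewrite inE negb_or => /andP[h'Nh h'Nhs]; rewrite y_x' // x_t'.
Qed.

Lemma flat_cabt_from hs (t : traj S N H) :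
  uniq hs -> {in hs, forall h, inactive_order h (t.2 h)} ->
  flat_dist (cabt_from fsrc ftgt ordB hs t) (\prod_(h <- hs) step_weight h (t.2 h)).
Proof.
elim: hs t => [|h hs IH] t /=; first by rewrite big_nil => _ _; apply: flat_dret.
move=> /andP[hNhs hs_uniq] inactive; rewrite big_cons; apply: flat_dbind.
- by apply: flat_cabt_step; apply: inactive; apply: mem_head.
- move=> x /dsupp_cabt_step[_ x_t].
  have x_t_hs : {in hs, forall h', x.2 h' = t.2 h'}.
    by move=> h' h'hs; apply: x_t; apply: contraNneq hNhs => <-.
  have -> : \prod_(h' <- hs) step_weight h' (t.2 h') =
            \prod_(h' <- hs) step_weight h' (x.2 h').
    by apply: eq_big_seq => h' /x_t_hs ->.
  by apply: IH => // h' h'hs; rewrite x_t_hs //; apply: inactive; rewrite inE h'hs orbT.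
move=> x1 x2 y x1d x2d /dsupp_cabt_from[y_x1 y_x1'] /dsupp_cabt_from[y_x2 y_x2'].
have [x1_t x1_t'] := dsupp_cabt_step x1d; have [x2_t x2_t'] := dsupp_cabt_step x2d.
rewrite [x1]surjective_pairing [x2]surjective_pairing x1_t x2_t; congr pair.
apply/ffunP => h'; have [->|h'Nh] := eqVneq h' h.
  by rewrite -(y_x1' h hNhs) y_x2'.
by rewrite x1_t' // x2_t'.
Qed.

End Procedure.

Theorem theorem1 (S : eqType) (N H : nat) (hH : (0 < H)%N)
  (tau : traj S N H) (fsrc ftgt : 'I_H -> {set 'I_N})
  (ordB : 'I_H -> seq 'I_N)
  (hord : forall h : 'I_H, perm_eq (ordB h) (enum (C_B (ftgt h) (tau.2 h))))
  (t1 t2 : traj S N H) :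
  0 < prob (cabt fsrc ftgt ordB tau) t1 ->
  0 < prob (cabt fsrc ftgt ordB tau) t2 ->
  prob (cabt fsrc ftgt ordB tau) t1 = prob (cabt fsrc ftgt ordB tau) t2.
Proof.
have inactive : {in enum 'I_H, forall h, inactive_order ordB h (tau.2 h)}.
  move=> h _; rewrite /inactive_order (perm_uniq (hord h)) enum_uniq /=.
  by apply/allP => j; rewrite (perm_mem (hord h)) mem_enum inE => /andP[].
have flat := flat_cabt_from fsrc ftgt (enum_uniq 'I_H) inactive.
by case: (flat t1) => ->; rewrite ?ltxx // => _; case: (flat t2) => ->; rewrite ?ltxx.
Qed.
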